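(* The Goemans–Williamson algorithm is a spectral algorithm: for every instance $W$, the cut it returns is induced by a generalized least eigenvector of $W$.
   Context: An instance of MAXCUT is identified with a non-negative symmetric $n\times n$ matrix $W$ with zero diagonal. A vector $v\in\mathbb R^n$ is a generalized least eigenvector (GLEV) of $W$ if there is a diagonal matrix $D$ such that $v$ is an eigenvector of $W+D$ for the least eigenvalue of $W+D$ (equivalently, $v\in\ker(W+\Delta)$ for some diagonal $\Delta$ with $W+\Delta\succeq0$). A vector $v$ induces the cut $(S,\bar S)$ with $S=\{i: v_i>0\}$. An algorithm for MAXCUT is spectral if it always returns a cut induced by a GLEV. The Goemans–Williamson (GW) algorithm: compute an optimal solution $P$ of the SDP ''minimize $\sum_{i,j}P_{ij}W_{ij}$ subject to $P\succeq0$, $P_{ii}=1$ for all $i$''; find $v_1,\dots,v_n$ in the unit sphere $S^{n-1}$ with $P_{ij}=\langle v_i,v_j\rangle$; sample $v\in S^{n-1}$ uniformly; return the cut induced by the vector $u$ with $u_i=\langle v,v_i\rangle$. *)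

From HB Require Import structures.
From mathcomp Require Import all_boot all_order all_algebra.
From mathcomp Require Import reals.
Set Implicit Arguments. Unset Strict Implicit. Unset Printing Implicit Defensive.
Import Order.TTheory GRing.Theory Num.Theory.
Local Open Scope ring_scope.

Section Defs.
Variable R : realType.
Variable n : nat.

Definition maxcut_instance (W : 'M[R]_n) : Prop :=
  W^T = W /\ (forall i j, 0 <= W i j) /\ (forall i, W i i = 0).

Definition psd (A : 'M[R]_n) : Prop :=
  forall x : 'rV[R]_n, 0 <= (x *m A *m x^T) 0 0.

Definition in_sphere (x : 'rV[R]_n) : Prop := \sum_(k < n) x 0 k ^+ 2 = 1.

Definition dotv (x y : 'rV[R]_n) : R := \sum_(k < n) x 0 k * y 0 k.

(* v is a generalized least eigenvector of W: for some diagonal matrix D,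
   v lies in the eigenspace of W + D for the least eigenvalue of W + D
   (eigenvalue = mathcomp's [eigenvalue]; the zero vector belongs to the
   eigenspace, matching the "v in ker(W + Delta)" formulation). *)
Definition GLEV (W : 'M[R]_n) (v : 'rV[R]_n) : Prop :=
  exists (d : 'rV[R]_n) (lam : R),
    let M := W + diag_mx d in
    [/\ eigenvalue M lam,
        (forall mu, eigenvalue M mu -> lam <= mu)
      & v *m M = lam *: v].

Definition induced_cut (v : 'rV[R]_n) : {set 'I_n} := [set i | 0 < v 0 i].

Definition sdp_feasible (P : 'M[R]_n) : Prop := psd P /\ forall i, P i i = 1.

Definition sdp_obj (W P : 'M[R]_n) : R := \sum_(i < n) \sum_(j < n) P i j * W i j.

Definition sdp_optimal (W P : 'M[R]_n) : Prop :=
  sdp_feasible P /\ forall Q, sdp_feasible Q -> sdp_obj W P <= sdp_obj W Q.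

Definition gw_vector (V : 'M[R]_n) (v : 'rV[R]_n) : 'rV[R]_n :=
  \row_i dotv v (row i V).

End Defs.

From mathcomp Require Import all_boot all_order all_algebra.
From mathcomp Require Import reals.
From mathcomp Require Import ring lra.
Import Order.TTheory GRing.Theory Num.Theory.
Local Open Scope ring_scope.
Set Implicit Arguments. Unset Strict Implicit. Unset Printing Implicit Defensive.

(* Let lambda_i = sum_j W_ij P_ij be the multiplier of the SDP constraint
   P_ii = 1 and M = W - diag(lambda).  Moving P along a feasible curve of Gram
   matrices (rotating every v_i towards a fresh orthogonal direction, with
   speed x_i) cannot decrease the objective, and its first variation is
   4 x^T M x; so M is positive semidefinite.  As tr(M P) = 0 and P = V V^T,
   every column of V lies in ker M, hence so does u = V v.  Then 0 is the
   least eigenvalue of M = W + D with D = -diag(lambda), and u is a GLEV. *)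

Section RealFacts.
Variable R : realFieldType.

Lemma lin_coef_eq0_of_quad_ge0 (a b : R) :
  0 <= b -> (forall t, 0 <= a * t + b * t ^+ 2) -> a = 0.
Proof.
move=> b_ge0 quad_ge0; have b1_neq0 : b + 1 != 0 by rewrite gt_eqF // ltr_wpDl.
have := quad_ge0 (- a / (b + 1)).
have -> : a * (- a / (b + 1)) + b * (- a / (b + 1)) ^+ 2 =
          - (a ^+ 2 / (b + 1) ^+ 2) by field.
rewrite oppr_ge0 pmulr_lle0 ?invr_gt0 ?exprn_even_gt0 //.
by move=> a2_le0; apply/eqP; rewrite -sqrf_eq0 eq_le a2_le0 sqr_ge0.
Qed.

Lemma ge0_of_ge0_perturbation (G B : R) :
  0 <= B -> (forall t, 0 < t <= 1 -> 0 <= G + t * B) -> 0 <= G.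
Proof.
move=> B_ge0 Ht; apply/ler_addgt0Pr => e e_gt0.
pose t := Num.min 1 (e / (B + 1)).
have t_gt0 : 0 < t by rewrite lt_min ltr01 divr_gt0 // ltr_wpDl.
have tB_le : t * B <= e.
  have : t <= e / (B + 1) by rewrite ge_min lexx orbT.
  rewrite ler_pdivlMr ?ltr_wpDl // => h; nra.
have := Ht t; rewrite t_gt0 ge_min lexx /= => /(_ isT); lra.
Qed.

Lemma ler_pdivr_addr_norm (a D : R) : 1 <= D -> a / D <= a + `|a| * (D - 1).
Proof.
move=> D_ge1; have D_gt0 : 0 < D by lra.
set q := (D - 1) / D.
have -> : a / D = a - a * q by rewrite /q; field; rewrite gt_eqF.
have q_ge0 : 0 <= q by rewrite divr_ge0 ?subr_ge0 // ltW.
have q_le : q <= D - 1 by rewrite ler_pdivrMr // ler_peMr ?subr_ge0.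
have Na_le : - a <= `|a| by rewrite -normrN ler_norm.
have := ler_wpM2r q_ge0 Na_le; have := ler_wpM2l (normr_ge0 a) q_le; lra.
Qed.

End RealFacts.

Section PsdMatrices.
Variables (R : realType) (n : nat).
Implicit Types (A : 'M[R]_n) (x y : 'rV[R]_n).

Lemma mxformE A x y : (x *m A *m y^T) 0 0 = \sum_i \sum_j x 0 i * A i j * y 0 j.
Proof. by rewrite mxE exchange_big; apply: eq_bigr => j _; rewrite !mxE mulr_suml. Qed.

Lemma mxform_self_eq0 x : (x *m x^T) 0 0 = 0 -> x = 0.
Proof.
have sq_ge0 j : 0 <= x 0 j * x^T j 0 by rewrite mxE -expr2 sqr_ge0.
rewrite mxE => /(psumr_eq0P (fun j _ => sq_ge0 j)) x0; apply/rowP => i.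
by apply/eqP; have /eqP := @x0 i isT; rewrite mxE -expr2 sqrf_eq0 mxE.
Qed.

Lemma mxformDZ A x y (t : R) :
  ((x + t *: y) *m A *m (x + t *: y)^T) 0 0 =
  (x *m A *m x^T) 0 0 + t * ((x *m A *m y^T) 0 0 + (y *m A *m x^T) 0 0)
  + t ^+ 2 * (y *m A *m y^T) 0 0.
Proof.
rewrite !mxformE mulrDr !mulr_sumr -!big_split /=; apply: eq_bigr => i _.
rewrite !mulr_sumr -!big_split /=; apply: eq_bigr => j _; rewrite !mxE; ring.
Qed.

Lemma psd_mxform_eq0 A x :
  A^T = A -> psd A -> (x *m A *m x^T) 0 0 = 0 -> x *m A = 0.
Proof.
move=> A_sym A_psd x0; set z := x *m A.
have xAz : (x *m A *m z^T) 0 0 = (z *m z^T) 0 0 by [].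
have zAx : (z *m A *m x^T) 0 0 = (z *m z^T) 0 0.
  by rewrite -mulmxA -{1}A_sym -trmx_mul.
apply: mxform_self_eq0.
suff /eqP : 2 * (z *m z^T) 0 0 = 0 by rewrite mulf_eq0 pnatr_eq0 /= => /eqP.
apply: (lin_coef_eq0_of_quad_ge0 (A_psd z)) => t.
have := A_psd (x + t *: z); rewrite mxformDZ x0 xAz zAx; lra.
Qed.

Lemma psd_eigenvalue_ge0 A mu : psd A -> eigenvalue A mu -> 0 <= mu.
Proof.
move=> A_psd /eigenvalueP [y yA y_neq0].
have := A_psd y; rewrite yA -scalemxAl mxE pmulr_lge0 // lt_def.
apply/andP; split; first by apply: contraNneq y_neq0 => /mxform_self_eq0 ->.
by rewrite mxE; apply: sumr_ge0 => i _; rewrite mxE -expr2 sqr_ge0.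
Qed.

Lemma mxtrace_mxformE A (U : 'M[R]_n) :
  \tr (U *m A *m U^T) = \sum_k (row k U *m A *m (row k U)^T) 0 0.
Proof.
apply: eq_bigr => k _; rewrite mxformE mxE exchange_big; apply: eq_bigr => j _.
by rewrite !mxE mulr_suml; apply: eq_bigr => i _; rewrite !mxE.
Qed.

Lemma psd_mxtrace_eq0 A (U : 'M[R]_n) :
  A^T = A -> psd A -> \tr (U *m A *m U^T) = 0 -> U *m A = 0.
Proof.
move=> A_sym A_psd; rewrite mxtrace_mxformE.
move=> /(psumr_eq0P (fun k _ => A_psd (row k U))) U0.
by apply/row_matrixP => k; rewrite row_mul row0 psd_mxform_eq0 // U0.
Qed.

End PsdMatrices.

Section SdpFirstOrderCondition.
Variables (R : realType) (n : nat).
Implicit Types (W P : 'M[R]_n) (x : 'rV[R]_n).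

Definition sdp_multiplier W P : 'rV[R]_n := \row_i \sum_j W i j * P i j.

(* Gram matrix of the vectors c_i v_i + 2 sqrt(t) e_i u, with u a unit vector
   orthogonal to every v_j, c_i = (1 - t x_i^2) / (1 + t x_i^2) and
   e_i = x_i / (1 + t x_i^2): c_i^2 + 4 t e_i^2 = 1 is the rational
   parametrisation of the circle, so the diagonal stays 1.  [sdp_tangent] is
   its derivative at t = 0. *)
Definition sdp_perturb P x t : 'M[R]_n :=
  \matrix_(i, j) (((1 - t * x 0 i ^+ 2) * (1 - t * x 0 j ^+ 2) * P i j
                    + 4 * t * x 0 i * x 0 j)
                  / ((1 + t * x 0 i ^+ 2) * (1 + t * x 0 j ^+ 2))).

Definition sdp_tangent P x : 'M[R]_n :=
  \matrix_(i, j) (4 * x 0 i * x 0 j - 2 * (x 0 i ^+ 2 + x 0 j ^+ 2) * P i j).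

Lemma perturb_denom_gt0 x t i : 0 <= t -> 0 < 1 + t * x 0 i ^+ 2.
Proof. by move=> t_ge0; have := mulr_ge0 t_ge0 (sqr_ge0 (x 0 i)); lra. Qed.

Lemma sdp_perturb_feasible P x t :
  sdp_feasible P -> 0 <= t -> sdp_feasible (sdp_perturb P x t).
Proof.
move=> [P_psd P_diag] t_ge0.
have dd_neq0 i : 1 + t * x 0 i ^+ 2 != 0 by rewrite gt_eqF ?perturb_denom_gt0.
split=> [y|i]; last by rewrite mxE P_diag; field; rewrite dd_neq0.
pose c := \row_i ((1 - t * x 0 i ^+ 2) / (1 + t * x 0 i ^+ 2) * y 0 i).
pose e := \sum_i x 0 i / (1 + t * x 0 i ^+ 2) * y 0 i.
have -> : (y *m sdp_perturb P x t *m y^T) 0 0 =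
          (c *m P *m c^T) 0 0 + 4 * t * e ^+ 2.
  rewrite !mxformE expr2 big_distrlr mulr_sumr -big_split; apply: eq_bigr => i _.
  rewrite mulr_sumr -big_split; apply: eq_bigr => j _ /=.
  by rewrite !mxE; field; rewrite dd_neq0 dd_neq0.
by rewrite addr_ge0 ?P_psd // mulr_ge0 ?sqr_ge0 // mulr_ge0.
Qed.

Lemma sdp_perturbE P x t i j : 0 <= t ->
  sdp_perturb P x t i j = P i j +
    t * (sdp_tangent P x i j / ((1 + t * x 0 i ^+ 2) * (1 + t * x 0 j ^+ 2))).
Proof.
move=> t_ge0; have dd_neq0 k : 1 + t * x 0 k ^+ 2 != 0.
  by rewrite gt_eqF ?perturb_denom_gt0.
by rewrite !mxE; field; rewrite dd_neq0 dd_neq0.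
Qed.

Lemma sdp_obj_perturb_le W P x : exists2 B, 0 <= B & forall t, 0 < t <= 1 ->
  sdp_obj W (sdp_perturb P x t) <=
  sdp_obj W P + t * (sdp_obj W (sdp_tangent P x) + t * B).
Proof.
pose s i j := x 0 i ^+ 2 + x 0 j ^+ 2 + x 0 i ^+ 2 * x 0 j ^+ 2.
have s_ge0 i j : 0 <= s i j.
  by rewrite /s; have := sqr_ge0 (x 0 i); have := sqr_ge0 (x 0 j); nra.
exists (\sum_i \sum_j `|sdp_tangent P x i j * W i j| * s i j).
  by apply: sumr_ge0 => i _; apply: sumr_ge0 => j _; rewrite mulr_ge0.
move=> t /andP[t_gt0 t_le1]; have t_ge0 := ltW t_gt0.
rewrite /sdp_obj mulrDr !mulr_sumr -!big_split /=; apply: ler_sum => i _.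
rewrite !mulr_sumr -!big_split /=; apply: ler_sum => j _.
set D := (1 + t * x 0 i ^+ 2) * (1 + t * x 0 j ^+ 2).
have D_ge1 : 1 <= D by rewrite /D; have := sqr_ge0 (x 0 i); have := sqr_ge0 (x 0 j); nra.
have D1_le : D - 1 <= t * s i j.
  by rewrite /D /s; have := sqr_ge0 (x 0 i); have := sqr_ge0 (x 0 j); nra.
rewrite sdp_perturbE // mulrDl lerD2l -mulrDr -mulrA ler_pM2l // mulrAC -/D.
rewrite (le_trans (ler_pdivr_addr_norm _ D_ge1)) // lerD2l mulrCA.
exact: ler_wpM2l.
Qed.

Lemma sdp_optimal_tangent_ge0 W P x :
  sdp_optimal W P -> 0 <= sdp_obj W (sdp_tangent P x).
Proof.
move=> [P_feas P_min]; have [B B_ge0 obj_le] := sdp_obj_perturb_le W P x.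
apply: (ge0_of_ge0_perturbation B_ge0) => t t01; have /andP[t_gt0 _] := t01.
have := le_trans (P_min _ (sdp_perturb_feasible x P_feas (ltW t_gt0))) (obj_le t t01).
by rewrite lerDl pmulr_rge0.
Qed.

Lemma mxform_diag (d x : 'rV[R]_n) :
  (x *m diag_mx d *m x^T) 0 0 = \sum_i d 0 i * x 0 i ^+ 2.
Proof. by rewrite mul_mx_diag mxE; apply: eq_bigr => i _; rewrite !mxE; ring. Qed.

Lemma sdp_obj_tangentE W P x : W^T = W -> P^T = P ->
  sdp_obj W (sdp_tangent P x) =
  4 * (x *m (W - diag_mx (sdp_multiplier W P)) *m x^T) 0 0.
Proof.
move=> W_sym P_sym.
have sym_sum : \sum_i \sum_j x 0 j ^+ 2 * P i j * W i j =
               \sum_i \sum_j x 0 i ^+ 2 * P i j * W i j.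
  rewrite exchange_big; apply: eq_bigr => i _; apply: eq_bigr => j _.
  by rewrite -[in LHS]W_sym -[in LHS]P_sym !mxE.
have multiplierE : \sum_i \sum_j x 0 i ^+ 2 * P i j * W i j =
                   \sum_i sdp_multiplier W P 0 i * x 0 i ^+ 2.
  apply: eq_bigr => i _; rewrite mxE mulr_suml; apply: eq_bigr => j _; ring.
have -> : (x *m (W - diag_mx (sdp_multiplier W P)) *m x^T) 0 0 =
          (x *m W *m x^T) 0 0 - (x *m diag_mx (sdp_multiplier W P) *m x^T) 0 0.
  by rewrite mulmxBr mulmxBl !mxE.
rewrite mxform_diag mxformE -multiplierE.
transitivity (4 * \sum_i \sum_j x 0 i * W i j * x 0 j
  - 2 * \sum_i \sum_j x 0 i ^+ 2 * P i j * W i j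
  - 2 * \sum_i \sum_j x 0 j ^+ 2 * P i j * W i j); last by rewrite sym_sum; ring.
rewrite /sdp_obj !mulr_sumr -!sumrB; apply: eq_bigr => i _.
rewrite !mulr_sumr -!sumrB; apply: eq_bigr => j _; rewrite mxE; ring.
Qed.

Lemma sdp_optimal_psd W P : W^T = W -> P^T = P -> sdp_optimal W P ->
  psd (W - diag_mx (sdp_multiplier W P)).
Proof.
move=> W_sym P_sym P_opt x.
by rewrite -(@pmulr_rge0 _ 4) // -sdp_obj_tangentE // sdp_optimal_tangent_ge0.
Qed.

Lemma mxtrace_sdp_multiplier W P : W^T = W -> (forall i, P i i = 1) ->
  \tr (P *m (W - diag_mx (sdp_multiplier W P))) = 0.
Proof.
move=> W_sym P_diag; rewrite mulmxBr linearB /= mul_mx_diag; apply/eqP.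
rewrite subr_eq0; apply/eqP; apply: eq_bigr => i _.
rewrite !mxE P_diag mul1r; apply: eq_bigr => j _.
by rewrite -[in LHS]W_sym mxE mulrC.
Qed.

End SdpFirstOrderCondition.

Section GeneralizedLeastEigenvectors.
Variables (R : realType) (n : nat).
Implicit Types (W : 'M[R]_n) (d v w y : 'rV[R]_n).

Lemma GLEV_of_psd_kernel W d y w :
  psd (W + diag_mx d) -> y != 0 -> y *m (W + diag_mx d) = 0 ->
  w *m (W + diag_mx d) = 0 -> GLEV W w.
Proof.
move=> M_psd y_neq0 yM wM; exists d, 0; split.
- by apply/eigenvalueP; exists y; rewrite ?scale0r.
- by move=> mu; apply: psd_eigenvalue_ge0.
- by rewrite scale0r.
Qed.

Lemma in_sphere_neq0 v : in_sphere v -> v != 0.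
Proof.
move=> v1; apply/eqP => v0; move: v1; rewrite v0 /in_sphere big1 => [/eqP|i _].
  by rewrite eq_sym oner_eq0.
by rewrite mxE expr0n.
Qed.

Lemma rV_neq0_coord v : v != 0 -> exists i, v 0 i != 0.
Proof.
move=> v_neq0; apply/existsP; apply: contraNT v_neq0; rewrite negb_exists.
by move=> /forallP v0; apply/eqP/rowP => i; rewrite mxE; apply/eqP/negPn/v0.
Qed.

Lemma gw_vectorE (V : 'M[R]_n) v : gw_vector V v = v *m V^T.
Proof. by apply/rowP => i; rewrite !mxE; apply: eq_bigr => k _; rewrite !mxE. Qed.

End GeneralizedLeastEigenvectors.

Theorem corollary3 (R : realType) (n : nat) (W P V : 'M[R]_n) (v : 'rV[R]_n) :
  maxcut_instance W ->
  sdp_optimal W P ->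
  (forall i, in_sphere (row i V)) ->
  (forall i j, P i j = dotv (row i V) (row j V)) ->
  in_sphere v ->
  exists w : 'rV[R]_n, GLEV W w /\ induced_cut w = induced_cut (gw_vector V v).
Proof.
move=> [W_sym _] P_opt V_sphere P_gram v_sphere.
have P_VVt : P = V *m V^T.
  by apply/matrixP => i j; rewrite P_gram mxE; apply: eq_bigr => k _; rewrite !mxE.
have P_sym : P^T = P by rewrite P_VVt trmx_mul trmxK.
have P_diag : forall i, P i i = 1 := P_opt.1.2.
set d := - sdp_multiplier W P.
have M_shift : W + diag_mx d = W - diag_mx (sdp_multiplier W P) by rewrite raddfN.
have M_sym : (W + diag_mx d)^T = W + diag_mx d by rewrite raddfD /= tr_diag_mx W_sym.
have M_psd : psd (W + diag_mx d) by rewrite M_shift; apply: sdp_optimal_psd.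
have VtM : V^T *m (W + diag_mx d) = 0.
  apply: psd_mxtrace_eq0 => //.
  by rewrite trmxK mxtrace_mulC mulmxA -P_VVt M_shift mxtrace_sdp_multiplier.
have [i0 _] := rV_neq0_coord (in_sphere_neq0 v_sphere).
have [k Vi0k] := rV_neq0_coord (in_sphere_neq0 (V_sphere i0)).
exists (gw_vector V v); split => //.
apply: (@GLEV_of_psd_kernel _ _ W d (row k V^T)) => //.
- by apply: contraNneq Vi0k => /rowP/(_ i0); rewrite !mxE => ->.
- by rewrite -row_mul VtM row0.
- by rewrite gw_vectorE -mulmxA VtM mulmx0.
Qed.
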